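(* The formal series $\mathbb F_1,\mathbb F_4$ satisfy $$\mathbb P(\mathbb F_1)-\mathbb Q(\mathbb F_4)=1,\qquad -\mathbb Q(\mathbb F_1)+\mathbb P(\mathbb F_4)=XY.$$
   Context: Let $\Gamma_{k,r}(d,j)$ ($k,r,d\in\mathbb N$, $j\in\{1,2,3,4\}$) be defined as follows. On the $2$-regular Bethe lattice $\mathcal B$ (infinite tree with all nodes of degree $3$, edges of length $1$, $m(B)$ midpoint of edge $B$), a path of length $k\ge1$ from oriented edge $\vec A$ to $\vec B$ is a tuple $(\vec C_0=\vec A,\dots,\vec C_k=\vec B)$ with the terminal node of $\vec C_i$ equal to the initial node of $\vec C_{i+1}$; an inversion is an $i$ with $\vec C_{i+1}=-\vec C_i$. For a pair $(\vec A,\vec B)$ at distance $d=\mathrm{dist}(m(A),m(B))\ge1$: $\vec A$ points toward $B$ if its terminal node is on the geodesic from $m(A)$ to $m(B)$, $\vec B$ points away from $A$ if its initial node is on it; type 1: ($\vec A$ toward, $\vec B$ away), type 2: (toward, toward $A$), type 3: (away from $B$, toward $A$), type 4: (away, away). For $d=0$, types 1,3 mean $\vec B=\vec A$ and types 2,4 mean $\vec B=-\vec A$. For $k\ge1$, $\Gamma_{k,r}(d,j)$ is the number of paths of length $k$ with $r$ inversions from $\vec A$ to $\vec B$ for a pair of type $j$ at distance $d$; for $k=0$, $\Gamma_{0,0}(0,1)=\Gamma_{0,0}(0,3)=1$ and $\Gamma_{0,r}(d,j)=0$ otherwise. Define formal power series $\mathbb F_j=\sum_{k,r,d\ge0}\Gamma_{k,r}(d,j)X^kY^rZ^d$.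 On formal series in $X,Y,Z$ let $\Theta(F)=F-\frac{2X}{Z}(F-F_{|Z=0})$; $\Theta$ is invertible: if $\Theta(F)=\sum_nG_n(X,Y)Z^n$ then $F=\sum_nF_nZ^n$ with $F_n=\sum_{p\ge0}(2X)^pG_{n+p}$. Define $\mathbb P(F)=F-XZF-X^2(Y^2+Y)\Theta^{-1}(F)+X^2Y\,\Theta^{-1}(F)_{|Z=0}$ and $\mathbb Q(F)=2X^2Y\,\partial_Z\Theta^{-1}(F)_{|Z=0}$. *)

From mathcomp Require Import all_boot all_order all_algebra.
Set Implicit Arguments. Unset Strict Implicit. Unset Printing Implicit Defensive.
Import Order.TTheory GRing.Theory Num.Theory.

(* ---------- The 2-regular Bethe lattice (3-regular tree) ----------
   Nodes: reduced words over {0,1,2} (no two consecutive equal letters),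
   i.e. elements of Z2*Z2*Z2; stored with the last generator at the head.
   Node w is adjacent to w*g for each generator g; this is the Cayley graph
   of Z2*Z2*Z2, which is the infinite tree with all degrees 3. *)
Definition node := seq 'I_3.

Definition nb (g : 'I_3) (w : node) : node :=
  if w is h :: t then (if h == g then t else g :: w) else [:: g].

(* Oriented edge (u, g): from u to nb g u.  Every oriented edge is uniquely
   described by its initial node and its label. *)
Definition oedge := (node * 'I_3)%type.
Definition initn (e : oedge) : node := e.1.
Definition termn (e : oedge) : node := nb e.2 e.1.
Definition erev (e : oedge) : oedge := (termn e, e.2).

Fixpoint paths (k : nat) (A : oedge) : seq (seq oedge) :=
  match k with
  | 0 => [:: [:: A]]
  | k'.+1 => flatten [seq [seq A :: p | p <- paths k' (termn A, g)]
                     | g <- enum 'I_3]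
  end.

Fixpoint inversions (p : seq oedge) : nat :=
  match p with
  | a :: ((b :: _) as t) => (b == erev a) + inversions t
  | _ => 0
  end.

(* ---------- Canonical pair of type j at distance d ----------
   Geodesic of nodes v_0 = [::], v_{i+1} = lab i :: v_i (labels 0,1,2,1,2,...).
   A is the edge {v_0,v_1}; B is the edge {v_d, v_{d+1}}, so that
   dist(m(A), m(B)) = d.  A points toward B iff A = (v_0 -> v_1);
   B points away from A iff B = (v_d -> v_{d+1}).
   For d = 0 this gives B = A for types 1,3 and B = -A for types 2,4. *)
Definition lab (i : nat) : 'I_3 :=
  if i == 0 then ord0 else if odd i then Ordinal (isT : 1 < 3) else ord_max.
Fixpoint vgeo (i : nat) : node :=
  match i with 0 => [::] | i'.+1 => lab i' :: vgeo i' end.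

Definition A_toward : oedge := (vgeo 0, lab 0).
Definition A_away : oedge := erev A_toward.
Definition B_away (d : nat) : oedge := (vgeo d, lab d).
Definition B_toward (d : nat) : oedge := erev (B_away d).

(* types j = 1,2,3,4 (any other j is treated as type 1; unused) *)
Definition canon (d j : nat) : oedge * oedge :=
  match j with
  | 2 => (A_toward, B_toward d)
  | 3 => (A_away, B_toward d)
  | 4 => (A_away, B_away d)
  | _ => (A_toward, B_away d)
  end.

(* For k = 0 this gives
   Gamma_{0,0}(0,1) = Gamma_{0,0}(0,3) = 1 and 0 otherwise, as in the paper. *)
Definition Gamma (k r d j : nat) : nat :=
  let AB := canon d j in
  count (fun p => (last AB.1 p == AB.2) && (inversions p == r)) (paths k AB.1).

(* ---------- Formal power series in X, Y, Z with integer coefficients ----------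
   s k r d = coefficient of X^k Y^r Z^d. *)
Definition ser := nat -> nat -> nat -> int.

Local Open Scope ring_scope.

Definition FF (j : nat) : ser := fun k r d => (Gamma k r d j)%:Z.

Definition ser1 : ser := fun k r d => ((k == 0%N) && (r == 0%N) && (d == 0%N))%:R.
Definition serXY : ser := fun k r d => ((k == 1%N) && (r == 1%N) && (d == 0%N))%:R.

(* Theta^{-1}: if Theta(F) = sum_n G_n Z^n then F_n = sum_p (2X)^p G_{n+p};
   coefficient of X^k Y^r Z^n is sum_{p<=k} 2^p [X^(k-p) Y^r Z^(n+p)] G. *)
Definition ThetaInv (G : ser) : ser :=
  fun k r n => \sum_(0 <= p < k.+1) (2 ^+ p) * G (k - p)%N r (n + p)%N.

(* Theta itself, for reference: Theta(F) = F - (2X/Z)(F - F_{|Z=0}) *)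
Definition Theta (F : ser) : ser :=
  fun k r d => F k r d - (if k is k'.+1 then 2 * F k' r d.+1 else 0).

(* P(F) = F - XZ F - X^2 (Y^2+Y) Theta^{-1}(F) + X^2 Y Theta^{-1}(F)_{|Z=0} *)
Definition PP (F : ser) : ser := fun k r d =>
  let T := ThetaInv F in
  F k r d
  - (if (k, d) is (k'.+1, d'.+1) then F k' r d' else 0)
  - (if k is k'.+2 then
       (if r is r'.+2 then T k' r' d else 0) + (if r is r'.+1 then T k' r' d else 0)
     else 0)
  + (if (k, r, d) is (k'.+2, r'.+1, 0%N) then T k' r' 0%N else 0).

(* Q(F) = 2 X^2 Y (d/dZ Theta^{-1}(F))_{|Z=0} *)
Definition QQ (F : ser) : ser := fun k r d =>
  if (k, r, d) is (k'.+2, r'.+1, 0%N) then 2 * ThetaInv F k' r' 1%N else 0.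

(* Weight every walk by Y^(number of inversions); the counts Gamma_{k,.}(d,j) become the
   coefficients of a polynomial in Y.  As the tree is homogeneous, the weight polynomial of
   the walks of length k from the base edge A to an edge E only depends on the position of
   E relative to A: the side of A it lies on, its distance d, and whether it points away
   from A or back toward it.  Cutting a walk before its last step gives linear recurrences
   between these position polynomials, since the positions of the three edges ending at the
   initial node of E are determined by that of E.  Theta^{-1}(F_s) turns out to be, up to a
   shift in X and Y, the series of the walks ending at edges that point back toward A, and
   the two identities are exactly these recurrences read off coefficientwise. *)

From mathcomp Require Import all_boot all_order all_algebra.
From mathcomp Require Import ring.
Set Implicit Arguments. Unset Strict Implicit. Unset Printing Implicit Defensive.
Import GRing.Theory.
Local Open Scope ring_scope.

Definition o1 : 'I_3 := Ordinal (isT : (1 < 3)%N).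
Definition o2 : 'I_3 := ord_max.

Lemma ord3P (x : 'I_3) : [\/ x = ord0, x = o1 | x = o2].
Proof.
by case: x => [[|[|[|m]]] lt_x3]; [constructor 1|constructor 2|constructor 3|];
  try apply: val_inj.
Qed.

Lemma sum_ord3 (V : nmodType) (F : 'I_3 -> V) :
  \sum_(h < 3) F h = F ord0 + F o1 + F o2.
Proof.
rewrite !big_ord_recl big_ord0 addr0 addrA.
by congr (_ + F _ + F _); apply: val_inj.
Qed.

Lemma sum_ord3_neq (V : nmodType) (F : bool -> V) (x g : 'I_3) :
  \sum_(h < 3 | h != x) F (h == g) = F (g != x) + F false.
Proof.
rewrite big_mkcond sum_ord3 /=.
by case: (ord3P x) => ->; case: (ord3P g) => ->; rewrite /= ?add0r ?addr0 // addrC.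
Qed.

Lemma sum_ord3_ifeq (T : Type) (V : nmodType) (f : T -> bool -> V) (a b : T)
    (x g : 'I_3) :
  \sum_(h < 3) f (if h == x then a else b) (h == g) =
  f a (x == g) + (f b (g != x) + f b false).
Proof.
rewrite (bigD1 x) //= eqxx -sum_ord3_neq; congr (_ + _).
by apply: eq_bigr => h /negbTE ->.
Qed.

Definition reduced (w : node) : bool := sorted (fun a b : 'I_3 => a != b) w.

Lemma reduced_cons x t :
  reduced (x :: t) = reduced t && (if t is y :: _ then x != y else true).
Proof. by case: t => [|y t] //=; rewrite andbC. Qed.

Lemma reduced_nb g u : reduced u -> reduced (nb g u).
Proof.
case: u => [|x t] // red_u /=; case: eqP => [_|/eqP ne].
  by move: red_u; rewrite reduced_cons => /andP[].
by rewrite reduced_cons red_u eq_sym ne.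
Qed.

Lemma nbK g u : reduced u -> nb g (nb g u) = u.
Proof.
case: u => [|x t]; first by rewrite /= eqxx.
rewrite reduced_cons => /andP[_] /=; case: eqP => [<-|/eqP ne] /=; last by rewrite eqxx.
by case: t => [|y t] //= ne; rewrite eq_sym (negbTE ne).
Qed.

Lemma nb_eq_sym g a u : reduced a -> reduced u -> (nb g a == u) = (a == nb g u).
Proof. by move=> red_a red_u; apply/eqP/eqP => [<-|->]; rewrite nbK. Qed.

Definition walkpoly (k : nat) (A E : oedge) : {poly int} :=
  \sum_(p <- paths k A | last A p == E) 'X^(inversions p).

Lemma coef_walkpoly k A E r :
  (walkpoly k A E)`_r =
  (count (fun p => (last A p == E) && (inversions p == r)) (paths k A))%:R.
Proof.
rewrite coef_sum -sum1_count natr_sum [RHS]big_mkcondr.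
by apply: eq_bigr => p _; rewrite coefXn eq_sym; case: eqP.
Qed.

Lemma paths_head k A p : p \in paths k A -> p = A :: behead p.
Proof.
case: k => [|k] /=; first by rewrite inE => /eqP ->.
by case/flattenP=> _ /mapP[g _ ->] /mapP[q _ ->].
Qed.

Lemma walkpoly_first k A E :
  walkpoly k.+1 A E =
  \sum_(g < 3) 'X^((termn A, g) == erev A) * walkpoly k (termn A, g) E.
Proof.
rewrite /walkpoly /= big_flatten /= big_map big_enum /=.
apply: eq_bigr => g _; rewrite big_map mulr_sumr big_mkcond [RHS]big_mkcond /=.
apply: eq_big_seq => q /paths_head ->.
by rewrite /= -exprD.
Qed.

Lemma walkpoly0 A E : walkpoly 0 A E = (A == E)%:R.
Proof. by rewrite /walkpoly /= big_cons big_nil addr0; case: eqP. Qed.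

Lemma sum_mul_natr_eq (R : nzSemiRingType) (I : finType) (F : I -> R) (j : I) :
  \sum_i F i * (i == j)%:R = F j.
Proof.
rewrite (bigD1 j) //= eqxx mulr1 big1 ?addr0 // => i /negbTE ->.
by rewrite mulr0.
Qed.

Lemma walkpoly_last k A E : reduced A.1 -> reduced E.1 ->
  walkpoly k.+1 A E = \sum_(h < 3) 'X^(h == E.2) * walkpoly k A (nb h E.1, h).
Proof.
elim: k A => [|k IH] A red_A red_E.
  case: A red_A => a ga red_a; case: E red_E => u e red_u.
  rewrite walkpoly_first /termn /erev /=.
  under eq_bigr => g _ do rewrite walkpoly0 !xpair_eqE eqxx /= -mulnb natrM mulrA.
  under [RHS]eq_bigr => h _ do
    rewrite walkpoly0 xpair_eqE [ga == h]eq_sym -mulnb natrM mulrA.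
  by rewrite !sum_mul_natr_eq eq_sym nb_eq_sym.
rewrite walkpoly_first.
under eq_bigr => g _ do rewrite IH ?reduced_nb // mulr_sumr.
rewrite exchange_big; apply: eq_bigr => h _.
by rewrite walkpoly_first mulr_sumr; apply: eq_bigr => g _; rewrite mulrCA.
Qed.

(* The base edge A joins [::] and [:: ord0].  [side w] tells whether the node w lies beyond
   [:: ord0] (its first letter, stored last, is ord0) and [depth w] is its distance to the
   nearer endpoint of A.  [Away s d] is the position of the edge at distance d on side s
   pointing away from A, [Away s 0] being A itself oriented toward side s, and
   [Toward s d] (d > 0) is the position of its reverse. *)
Inductive pos := Away of bool & nat | Toward of bool & nat.

Definition side (w : node) : bool := (w != [::]) && (last ord0 w == ord0).
Definition depth (w : node) : nat := size w - side w.

Definition pos_of (E : oedge) : pos :=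
  match E with
  | ([::], g) => if g == ord0 then Away true 0%N else Away false 1%N
  | ((x :: _) as u, g) =>
      if x != g then Away (side u) (depth u).+1
      else if depth u is d.+1 then Toward (side u) d.+1 else Away false 0%N
  end.

(* The positions of the three edges that can precede an edge at position c in a walk,
   each flagged by whether that step is an inversion. *)
Definition preds (c : pos) : seq (pos * bool) :=
  match c with
  | Away s 0 =>
      [:: (Away (~~ s) 0%N, true); (Toward (~~ s) 1%N, false);
          (Toward (~~ s) 1%N, false)]
  | Away s d.+1 =>
      [:: (Away s d, false); (Toward s d.+1, true); (Toward s d.+1, false)]
  | Toward s d =>
      [:: (Away s d, true); (Toward s d.+1, false); (Toward s d.+1, false)]
  end.

Lemma side_cons2 y x t : side (y :: x :: t) = side (x :: t).
Proof. by []. Qed.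

Lemma depth_cons2 y x t : depth (y :: x :: t) = (depth (x :: t)).+1.
Proof.
rewrite /depth side_cons2.
by case: (side _); rewrite /= ?subn0 ?subn1.
Qed.

Lemma depth_eq0 x t : depth (x :: t) = 0 -> x :: t = [:: ord0].
Proof.
case: t => [|y t]; last by rewrite depth_cons2.
by rewrite /depth /side /=; case: eqP => [-> | _].
Qed.

Lemma pos_of_cons x t g :
  pos_of (x :: t, g) =
  if x != g then Away (side (x :: t)) (depth (x :: t)).+1
  else if depth (x :: t) is d.+1 then Toward (side (x :: t)) d.+1
  else Away false 0%N.
Proof. by []. Qed.

Lemma pos_of_into h x t : reduced (x :: t) ->
  pos_of (nb h (x :: t), h) =
  if h == x then Away (side (x :: t)) (depth (x :: t))
  else Toward (side (x :: t)) (depth (x :: t)).+1.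
Proof.
rewrite /nb eq_sym; case: eqP => [-> | _]; last first.
  by rewrite pos_of_cons eqxx depth_cons2.
case: t => [|y t]; first by rewrite /= /depth /side /=; case: eqP.
by rewrite reduced_cons => /andP[_ xy]; rewrite pos_of_cons eq_sym xy depth_cons2.
Qed.

Lemma sum_preds (V : nmodType) (f : pos -> bool -> V) u g : reduced u ->
  \sum_(h < 3) f (pos_of (nb h u, h)) (h == g) =
  \sum_(cb <- preds (pos_of (u, g))) f cb.1 cb.2.
Proof.
case: u => [|x t] red_u.
  rewrite sum_ord3; case: (ord3P g) => ->; rewrite [pos_of ([::], _)]/=;
  by rewrite !big_cons big_nil addr0 addrA // [RHS]addrAC.
under eq_bigr => h _ do rewrite pos_of_into //.
rewrite sum_ord3_ifeq pos_of_cons eq_sym.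
case: eqP => [<- | _] /=; last by rewrite !big_cons big_nil addr0.
case dE: (depth _) => [|d]; last by rewrite !big_cons big_nil addr0.
by case: (depth_eq0 dE) => -> ->; rewrite !big_cons big_nil addr0.
Qed.

Fixpoint walkpos (k : nat) (c : pos) : {poly int} :=
  if k is k'.+1 then \sum_(cb <- preds c) 'X^(cb.2) * walkpos k' cb.1
  else if c is Away true 0 then 1 else 0.

Definition flip (b : bool) (c : pos) : pos :=
  match c with Away s d => Away (b (+) s) d | Toward s d => Toward (b (+) s) d end.

Lemma preds_flip b c : preds (flip b c) = [seq (flip b cb.1, cb.2) | cb <- preds c].
Proof. by case: c => s [|d] //=; rewrite addbN. Qed.

(* Reversing the base edge amounts to the mirror symmetry exchanging the two sides of A. *)
Definition base (b : bool) : oedge := if b then A_away else A_toward.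

Lemma walkpos0_pos_of b E : walkpos 0 (flip b (pos_of E)) = (base b == E)%:R.
Proof.
case: E => [[|x t] g]; first by case: (ord3P g) => ->; case: b.
rewrite pos_of_cons; case: eqP => [<- | /eqP xg] /=.
  case dE: depth => [|d]; first by case: (depth_eq0 dE) => -> ->; case: b.
  by case: b => //=; case: eqP => // -[xE tE]; move: dE; rewrite -xE -tE.
rewrite if_same; case: b => //=; case: eqP => // -[xE _ gE].
by rewrite -xE -gE eqxx in xg.
Qed.

Lemma walkpoly_base b k E :
  reduced E.1 -> walkpoly k (base b) E = walkpos k (flip b (pos_of E)).
Proof.
elim: k E => [|k IH] [u g] red_u; first by rewrite walkpoly0 walkpos0_pos_of.
rewrite walkpoly_last //=; last by case: (b).
under eq_bigr => h _ do rewrite IH ?reduced_nb //.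
rewrite (sum_preds (fun c e => 'X^e * walkpos k (flip b c))) //=.
by rewrite preds_flip big_map.
Qed.

Lemma lab_neq d : lab d != lab d.+1.
Proof. by case: d => [|d] //; rewrite /lab /=; case: (odd d). Qed.

Lemma reduced_vgeo d : reduced (vgeo d).
Proof.
by elim: d => [|[|d] IH] //; rewrite [vgeo _.+2]/= reduced_cons IH eq_sym lab_neq.
Qed.

Lemma pos_of_B_away d : pos_of (B_away d) = Away true d.
Proof.
case: d => [|d] //; rewrite /B_away [vgeo _]/= pos_of_cons lab_neq.
elim: d => [|d [sideE depthE]] //.
by rewrite [vgeo _]/= side_cons2 depth_cons2 sideE depthE.
Qed.

Lemma FF_walkpos s k r d : FF (if s then 1 else 4) k r d = (walkpos k (Away s d))`_r.
Proof.
have -> : FF (if s then 1 else 4) k r d = (count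
    (fun p => (last (base (~~ s)) p == B_away d) && (inversions p == r))
    (paths k (base (~~ s))))%:R by rewrite natz; case: s.
by rewrite -coef_walkpoly walkpoly_base ?reduced_vgeo // pos_of_B_away /= addbT negbK.
Qed.

(* Walks ending at the edge at distance n on side s pointing back toward A, where n = 0
   stands for A pointing away from side s, so that [walkback_succ] holds for every n. *)
Definition walkback (s : bool) (k n : nat) : {poly int} :=
  walkpos k (if n is 0 then Away (~~ s) 0%N else Toward s n).

Lemma walkpos0_away s d : walkpos 0 (Away s d) = (s && (d == 0%N))%:R.
Proof. by case: s; case: d. Qed.

Lemma walkpos0_toward s d : walkpos 0 (Toward s d) = 0.
Proof. by []. Qed.

Lemma walkpos_away0_succ s k :
  walkpos k.+1 (Away s 0) =
  'X * walkpos k (Away (~~ s) 0) + walkpos k (Toward (~~ s) 1) *+ 2.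
Proof. by rewrite /= !big_cons big_nil addr0 /= expr0 expr1 !mul1r mulr2n. Qed.

Lemma walkpos_away_succ s k d :
  walkpos k.+1 (Away s d.+1) =
  walkpos k (Away s d) + ('X + 1) * walkpos k (Toward s d.+1).
Proof. by rewrite /= !big_cons big_nil addr0 /= expr0 expr1 mulrDl !mul1r addrA. Qed.

Lemma walkpos_toward_succ s k d :
  walkpos k.+1 (Toward s d) =
  'X * walkpos k (Away s d) + walkpos k (Toward s d.+1) *+ 2.
Proof. by rewrite /= !big_cons big_nil addr0 /= expr0 expr1 !mul1r mulr2n. Qed.

Lemma walkback_succ s k n :
  walkback s k.+1 n = 'X * walkpos k (Away s n) + walkback s k n.+1 *+ 2.
Proof.
by case: n => [|n]; rewrite /walkback (walkpos_away0_succ, walkpos_toward_succ) ?negbK.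
Qed.

Arguments walkpos : simpl never.

Lemma coef0_walkback s k n : (walkback s k.+1 n)`_0 = 0.
Proof.
elim: k n => [|k IH] n;
  by rewrite walkback_succ coefD coefXM add0r coefMn ?IH ?coef0 mul0rn.
Qed.

Section ThetaInvWalkpos.

Variable F : bool -> ser.
Hypothesis FE : forall s k r d, F s k r d = (walkpos k (Away s d))`_r.

Lemma ThetaInv_walkpos s k r n : ThetaInv (F s) k r n = (walkback s k.+1 n)`_r.+1.
Proof.
elim: k n => [|k IH] n; rewrite /ThetaInv.
  rewrite big_nat1 expr0 mul1r subn0 addn0 FE walkback_succ coefD coefXM coefMn.
  by rewrite coef0 mul0rn addr0.
rewrite big_nat_recl // expr0 mul1r subn0 addn0 FE (walkback_succ _ k.+1).
rewrite coefD coefXM coefMn -IH.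
congr (_ + _); rewrite /ThetaInv -sumrMnl; apply: eq_bigr => i _.
by rewrite subSS addnS -addSn exprS -mulrA mulr_natl.
Qed.

Lemma ThetaInv_pred s k r n :
  (if r is r'.+1 then ThetaInv (F s) k r' n else 0) = (walkback s k.+1 n)`_r.
Proof. by case: r => [|r]; rewrite ?ThetaInv_walkpos ?coef0_walkback. Qed.

Lemma ThetaInv_pred2 s k r n :
  (if r is r'.+2 then ThetaInv (F s) k r' n else 0) = ('X * walkback s k.+1 n)`_r.
Proof.
by rewrite coefXM; case: r => [|[|r]] //=; rewrite ?ThetaInv_walkpos ?coef0_walkback.
Qed.

Definition PPpoly (s : bool) (k d : nat) : {poly int} :=
  walkpos k (Away s d)
  - (if (k, d) is (k'.+1, d'.+1) then walkpos k' (Away s d') else 0)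
  - (if k is k'.+2 then
       ('X + 1) * walkback s k'.+1 d - (if d is 0 then walkback s k'.+1 0 else 0)
     else 0).

Definition QQpoly (s : bool) (k d : nat) : {poly int} :=
  if (k, d) is (k'.+2, 0) then walkback s k'.+1 1 *+ 2 else 0.

Lemma PP_coef s k r d : PP (F s) k r d = (PPpoly s k d)`_r.
Proof.
(* for k >= 2 and d > 0 the Z^0-term of PP remains a match on r with two zero branches *)
rewrite /PP /PPpoly; case: k => [|[|k]]; case: d => [|d] /=;
  rewrite !FE ?ThetaInv_pred2 ?ThetaInv_pred ?mulrDl ?mul1r !(coefB, coefD) ?coef0;
  last case: r => [|r].
all: ring.
Qed.

Lemma QQ_coef s k r d : QQ (F s) k r d = (QQpoly s k d)`_r.
Proof.
rewrite /QQ /QQpoly; case: k => [|[|k]]; case: d => [|d]; case: r => [|r] //=;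
  rewrite ?coef0 // coefMn ?coef0_walkback ?mul0rn //.
by rewrite ThetaInv_walkpos mulr_natl.
Qed.

Lemma PPpoly_sub_QQpoly s k d :
  PPpoly s k d - QQpoly (~~ s) k d =
  if s then (if (k, d) is (0, 0) then 1 else 0)
  else (if (k, d) is (1, 0) then 'X else 0).
Proof.
rewrite /PPpoly /QQpoly /walkback; case: k => [|[|k]]; case: d => [|d] /=.
- by rewrite walkpos0_away andbT !subr0; case: s.
- by rewrite walkpos0_away andbF !subr0 if_same.
- rewrite walkpos_away0_succ walkpos0_away walkpos0_toward andbT mul0rn addr0 !subr0.
  by case: s; rewrite ?mulr0 ?mulr1.
- by rewrite walkpos_away_succ walkpos0_toward mulr0 addr0 subrr !subr0 if_same.
- by rewrite walkpos_away0_succ if_same; ring.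
- by rewrite walkpos_away_succ if_same; ring.
Qed.

End ThetaInvWalkpos.

Lemma ser1_coef k r d :
  ser1 k r d = ((if (k, d) is (0, 0) then 1 else 0) : {poly int})`_r.
Proof. by case: k => [|k]; case: d => [|d]; rewrite ?coef1 ?coef0 /ser1 ?andbT ?andbF. Qed.

Lemma serXY_coef k r d :
  serXY k r d = ((if (k, d) is (1, 0) then 'X else 0) : {poly int})`_r.
Proof.
by case: k => [|[|k]]; case: d => [|d]; rewrite ?coefX ?coef0 /serXY ?andbT ?andbF.
Qed.

Theorem lemma4 :
  (forall k r d : nat, PP (FF 1) k r d - QQ (FF 4) k r d = ser1 k r d) /\
  (forall k r d : nat, - QQ (FF 1) k r d + PP (FF 4) k r d = serXY k r d).
Proof.
have FE := FF_walkpos; split=> k r d.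
  rewrite (PP_coef FE true) (QQ_coef FE false) -coefB.
  by rewrite (PPpoly_sub_QQpoly true) ser1_coef.
rewrite addrC (PP_coef FE false) (QQ_coef FE true) -coefB.
by rewrite (PPpoly_sub_QQpoly false) serXY_coef.
Qed.
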